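(* Let $A=(a_{ij})$ be a real $n\times n$ matrix with nonnegative entries, $\mathbf 1=(1,\ldots,1)^{\mathrm T}$, $L=\operatorname{diag}(A\mathbf 1)-A$, $P=I-\tau L$ with $0<\tau\le\bigl(\max_i\sum_{j\neq i}a_{ij}\bigr)^{-1}$, and let $S$ be the orthogonal projection of $\mathbb R^n$ onto $\mathcal R(L)\oplus\operatorname{span}(\mathbf 1)$. Then $(PS)^k=P^kS$ for every $k=1,2,\ldots$.
   Context: $\mathcal R(L)$ denotes the range of $L$; $I$ is the identity matrix. *)

From HB Require Import structures.
From mathcomp Require Import all_boot all_order all_algebra.
Set Implicit Arguments. Unset Strict Implicit. Unset Printing Implicit Defensive.
Import Order.TTheory GRing.Theory Num.Theory.
Local Open Scope ring_scope.

Definition ones (R : realFieldType) (n : nat) : 'cV[R]_n := const_mx 1.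

Definition laplacian (R : realFieldType) (n : nat) (A : 'M[R]_n) : 'M[R]_n :=
  diag_mx (A *m ones R n)^T - A.

(* max_i sum_{j <> i} a_ij  (entries are nonnegative, so folding max from 0 is harmless) *)
Definition max_offdiag_rowsum (R : realFieldType) (n : nat) (A : 'M[R]_n) : R :=
  \big[Num.max/0]_(i < n) \sum_(j < n | j != i) A i j.

(* The subspace R(L) + span(1), represented (mxalgebra convention) as the row
   space of a matrix whose rows are transposes of vectors in the subspace:
   column space of L = row space of L^T. *)
Definition range_plus_ones (R : realFieldType) (n : nat) (L : 'M[R]_n) :=
  (L^T + (ones R n)^T)%MS.

Definition is_orth_proj (R : realFieldType) (n m : nat) (S : 'M[R]_n) (W : 'M[R]_(m, n)) :=
  forall x : 'cV[R]_n,
    ((S *m x)^T <= W)%MS /\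
    (forall w : 'rV[R]_n, (w <= W)%MS -> w *m (x - S *m x) = 0).

From HB Require Import structures.
From mathcomp Require Import all_boot all_order all_algebra.
Set Implicit Arguments.
Unset Strict Implicit.
Unset Printing Implicit Defensive.

Import Order.TTheory GRing.Theory Num.Theory.
Local Open Scope ring_scope.

(* Only the invariance of W := R(L) + span(1) under P is used.  Since P W <= W, every column of
   P S lies in W and is therefore fixed by the orthogonal projection S; thus
   S P S = P S, and (P S)^(k+1) = P (S P S) ... = P^(k+1) S by induction. *)

Lemma trmx_mul_self_eq0 (R : realDomainType) n (v : 'cV[R]_n) :
  v^T *m v = 0 -> v = 0.
Proof.
move=> /(congr1 (fun M : 'M[R]_1 => M 0 0)); rewrite !mxE.
under eq_bigr do rewrite mxE.
move=> /psumr_eq0P sq0; apply/colP => i; rewrite mxE.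
have /eqP : v i 0 * v i 0 = 0 by apply: sq0 => // j _; rewrite -expr2 sqr_ge0.
by rewrite mulf_eq0 orbb => /eqP.
Qed.

Section OrthogonalProjection.

Variables (R : realFieldType) (n m : nat) (S : 'M[R]_n) (W : 'M[R]_(m, n)).
Hypothesis S_proj : is_orth_proj S W.

Lemma orth_proj_fix (z : 'cV[R]_n) : (z^T <= W)%MS -> S *m z = z.
Proof.
move=> zW; have [SzW orthW] := S_proj z.
have dW : ((z - S *m z)^T <= W)%MS.
  by rewrite linearB /= addmx_sub // eqmx_opp.
by apply/eqP; rewrite eq_sym -subr_eq0; apply/eqP/trmx_mul_self_eq0/orthW.
Qed.

Lemma orth_proj_mul_stable (M : 'M[R]_n) :
  (forall y : 'cV[R]_n, (y^T <= W)%MS -> ((M *m y)^T <= W)%MS) ->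
  S *m (M *m S) = M *m S.
Proof.
move=> MW; apply/matrixP => i j.
have /orth_proj_fix := MW _ (S_proj (delta_mx j 0)).1.
move/(congr1 (fun v : 'cV[R]_n => v i 0)).
by rewrite !mulmxA -!colE !mxE.
Qed.

End OrthogonalProjection.

Lemma range_plus_ones_stable (R : realFieldType) n (L : 'M[R]_n) (t : R)
    (y : 'cV[R]_n) :
  (y^T <= range_plus_ones L)%MS ->
  (((1%:M - t *: L) *m y)^T <= range_plus_ones L)%MS.
Proof.
move=> yW; rewrite mulmxBl mul1mx -scalemxAl linearB /= linearZ /=.
rewrite addmx_sub // eqmx_opp scalemx_sub // trmx_mul.
exact: submx_trans (submxMl _ _) (addsmxSl _ _).
Qed.

Lemma exprS_mul_fixed (R : pzRingType) (p s : R) :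
  s * (p * s) = p * s -> forall k, (p * s) ^+ k.+1 = p ^+ k.+1 * s.
Proof.
move=> sps; elim=> [|k IHk]; first by rewrite !expr1.
by rewrite exprSr IHk -mulrA sps mulrA -exprSr.
Qed.

Theorem lemmaA1 (R : realFieldType) (n : nat) (A : 'M[R]_n) (tau : R)
  (S : 'M[R]_n) :
  (forall i j, 0 <= A i j) ->
  0 < tau ->
  tau * max_offdiag_rowsum A <= 1 ->
  is_orth_proj S (range_plus_ones (laplacian A)) ->
  let P := 1%:M - tau *: laplacian A in
  forall k : nat, (0 < k)%N -> (P *m S) ^+ k = P ^+ k *m S.
Proof.
move=> _ _ _ S_proj P [//|k] _.
apply: exprS_mul_fixed.
exact: orth_proj_mul_stable S_proj _ (@range_plus_ones_stable _ _ _ tau).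
Qed.
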